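(* Let $f$ be a non-degenerate $C^2$ function on $\mathbb R$ and let $F$ be a $C^1$ function on $\mathbb R$ with $\lim_{x\to-\infty}F(x)=-1$ and $\lim_{x\to+\infty}F(x)=1$. Let $a<b$ with $f(a)f(b)\neq0$. Then $$\mathcal H^0(\{f=0\}\cap[a,b])=\frac12\Big[F\Big(\frac{f'}{f}(b)\Big)-F\Big(\frac{f'}{f}(a)\Big)-\int_a^bF'\Big(\frac{f'(x)}{f(x)}\Big)\Big(\frac{f'(x)}{f(x)}\Big)'dx\Big].$$ In particular, if $a$ and $b$ are points of local extrema of $f$ (so $f'(a)=f'(b)=0$), then $$\mathcal H^0(\{f=0\}\cap[a,b])=-\frac12\int_a^bF'\Big(\frac{f'(x)}{f(x)}\Big)\Big(\frac{f'(x)}{f(x)}\Big)'dx.$$ Here the integrand is defined where $f(x)\neq0$ and the integral is the sum of the (improper) integrals over the finitely many open intervals of $[a,b]$ between consecutive zeros of $f$.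
   Context: $\mathcal H^0(\{f=0\}\cap[a,b])$ is the number of zeros of $f$ in $[a,b]$. A $C^1$ function $f$ on $\mathbb R$ is non-degenerate if there is no $x$ with $f(x)=f'(x)=0$ (equivalently $\sqrt{f^2+f'^2}$ has positive minimum on every compact set). *)

From Stdlib Require Import Reals List Sorted.
From Coquelicot Require Import Coquelicot.
Open Scope R_scope.

Definition is_C2 (f : R -> R) : Prop :=
  forall x, ex_derive f x /\ ex_derive (Derive f) x /\
            continuous (Derive (Derive f)) x.

Definition is_C1 (F : R -> R) : Prop :=
  forall x, ex_derive F x /\ continuous (Derive F) x.

Definition nondegenerate (f : R -> R) : Prop :=
  forall x, ~ (f x = 0 /\ Derive f x = 0).

Definition logder (f : R -> R) (x : R) : R := Derive f x / f x.

Definition integrand (F f : R -> R) (x : R) : R :=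
  Derive F (logder f x) * Derive (logder f) x.

Fixpoint is_pw_int (h : R -> R) (pts : list R) (v : R) : Prop :=
  match pts with
  | c :: ((d :: _) as rest) =>
      exists v1 v2, is_RInt_gen h (at_right c) (at_left d) v1 /\
                    is_pw_int h rest v2 /\ v = v1 + v2
  | _ => v = 0
  end.

(* Off the zeros of [f], [x |-> F (f'/f x)] is C^1 with derivative the integrand, so the
   improper integral over an interval between consecutive zeros is the difference of its
   one-sided limits at the endpoints.  At a zero [z], simple by non-degeneracy,
   [f'/f y * (y - z) -> 1]: [f'/f] jumps from [-oo] to [+oo], hence [F (f'/f)] from [-1] to
   [1], and zeros are isolated, hence finitely many in [a, b].  Telescoping, the integrals add
   up to [F (f'/f b) - F (f'/f a) - 2 * #zeros]. *)

From Stdlib Require Import Reals List Sorted Classical Lra.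
From Coquelicot Require Import Coquelicot.
Open Scope R_scope.

Lemma locally_Rabs (c : R) (Q : R -> Prop) :
  locally c Q <-> exists e, 0 < e /\ forall y, Rabs (y - c) < e -> Q y.
Proof.
  split.
  - intros [e He]. exists e. split; [apply cond_pos | intros y Hy; apply He, Hy].
  - intros [e [He HQ]]. exists (mkposreal e He). intros y Hy. apply HQ, Hy.
Qed.

Lemma locally_Rabs_lt (c e : R) : 0 < e -> locally c (fun y => Rabs (y - c) < e).
Proof. intros He. apply locally_Rabs. exists e. auto. Qed.

Lemma continuous_locally_neq0 (g : R -> R) (x : R) :
  continuous g x -> g x <> 0 -> locally x (fun y => g y <> 0).
Proof.
  intros Hg Hx. apply (filter_imp (fun y => Rabs (g y - g x) < Rabs (g x))).
  - intros y Hy E. rewrite E, Rminus_0_l, Rabs_Ropp in Hy. lra.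
  - exact (Hg _ (locally_Rabs_lt _ _ (Rabs_pos_lt _ Hx))).
Qed.

Lemma ratio_gt_third p q l : l <> 0 ->
  Rabs (p - l) < Rabs l / 2 -> Rabs (q - l) < Rabs l / 2 -> 1 / 3 < p / q.
Proof.
  intros Hl Hp Hq. apply Rabs_def2 in Hp. apply Rabs_def2 in Hq.
  destruct (Rlt_or_le 0 l) as [Hl0 | Hl0];
    [rewrite Rabs_pos_eq in Hp, Hq by lra | rewrite Rabs_left in Hp, Hq by lra];
    assert (E : p / q = 1 / 3 + (3 * p - q) * q / (3 * (q * q))) by (field; lra);
    rewrite E; assert (0 < (3 * p - q) * q / (3 * (q * q))) by (apply Rdiv_lt_0_compat; nra);
    lra.
Qed.

Lemma filter_prod_between x y : x < y ->
  filter_prod (at_right x) (at_left y)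
    (fun ab => forall t, Rmin (fst ab) (snd ab) <= t <= Rmax (fst ab) (snd ab) -> x < t < y).
Proof.
  intros Hxy.
  apply (Filter_prod _ _ _ (fun u => x < u < y) (fun u => x < u < y)).
  - apply locally_Rabs. exists (y - x). split; [lra|].
    intros u Hu Hxu. apply Rabs_def2 in Hu. lra.
  - apply locally_Rabs. exists (y - x). split; [lra|].
    intros u Hu Huy. apply Rabs_def2 in Hu. lra.
  - intros u v Hu Hv t. simpl. unfold Rmin, Rmax. destruct Rle_dec; lra.
Qed.

Lemma is_RInt_gen_Derive_open (g : R -> R) x y A B : x < y ->
  (forall t, x < t < y -> ex_derive g t /\ continuous (Derive g) t) ->
  filterlim g (at_right x) (locally A) -> filterlim g (at_left y) (locally B) ->
  is_RInt_gen (Derive g) (at_right x) (at_left y) (B - A).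
Proof.
  intros Hxy Hg HA HB. apply is_RInt_gen_Derive; auto;
    (eapply filter_imp; [|exact (filter_prod_between x y Hxy)]);
    intros ab Hab t Ht; apply Hg, Hab, Ht.
Qed.

Lemma filterlim_at_right_of_mul_gt (g : R -> R) z c : 0 < c ->
  locally z (fun y => y <> z -> c < g y * (y - z)) ->
  filterlim g (at_right z) (Rbar_locally p_infty).
Proof.
  intros Hc Hg P [M HM]. set (K := Rmax M 1).
  assert (HMK : M <= K) by apply Rmax_l.
  assert (HK : 0 < K) by (generalize (Rmax_r M 1); unfold K; lra).
  generalize (filter_and _ _ Hg (locally_Rabs_lt z (c / K) (Rdiv_lt_0_compat _ _ Hc HK))).
  unfold filtermap, at_right, within. apply filter_imp. intros y [Hy Hd] Hzy. apply HM.
  apply Rabs_def2 in Hd as [Hd _]. specialize (Hy ltac:(lra)).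
  assert (K * (y - z) < c) by (apply (Rmult_lt_compat_l K) in Hd; [field_simplify in Hd|]; lra).
  nra.
Qed.

Lemma filterlim_at_left_of_mul_gt (g : R -> R) z c : 0 < c ->
  locally z (fun y => y <> z -> c < g y * (y - z)) ->
  filterlim g (at_left z) (Rbar_locally m_infty).
Proof.
  intros Hc Hg P [M HM]. set (K := Rmax (- M) 1).
  assert (HMK : - M <= K) by apply Rmax_l.
  assert (HK : 0 < K) by (generalize (Rmax_r (- M) 1); unfold K; lra).
  generalize (filter_and _ _ Hg (locally_Rabs_lt z (c / K) (Rdiv_lt_0_compat _ _ Hc HK))).
  unfold filtermap, at_left, within. apply filter_imp. intros y [Hy Hd] Hyz. apply HM.
  apply Rabs_def2 in Hd as [_ Hd]. specialize (Hy ltac:(lra)).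
  assert (K * (z - y) < c) by (apply (Rmult_lt_compat_l K) in Hd; [field_simplify in Hd|]; lra).
  nra.
Qed.

Definition enumerates (P : R -> Prop) (a t : R) (l : list R) : Prop :=
  Sorted Rlt l /\ forall x, In x l <-> a <= x <= t /\ P x.

Lemma Sorted_Rlt_app_single l s :
  Sorted Rlt l -> (forall x, In x l -> x < s) -> Sorted Rlt (l ++ s :: nil).
Proof.
  induction l as [|x l IH]; intros Hl Hs; simpl.
  - repeat constructor.
  - inversion Hl as [|? ? Hl' Hxl]; subst. constructor.
    + apply IH; auto. intros y Hy. apply Hs. right. exact Hy.
    + destruct l as [|y l]; simpl; constructor.
      * apply Hs. left. reflexivity.
      * inversion Hxl. assumption.
Qed.

Lemma enumerates_extend P a t u s l : enumerates P a t l -> t <= u ->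
  (forall x, t < x <= u -> P x -> x = s) -> exists l', enumerates P a u l'.
Proof.
  intros [Hs Hl] Htu Hiso.
  destruct (classic (t < s /\ a <= s <= u /\ P s)) as [Hnew | Hnone].
  - exists (l ++ s :: nil). split.
    + apply Sorted_Rlt_app_single; auto. intros x Hx. apply Hl in Hx. lra.
    + intros x. rewrite in_app_iff. simpl. split.
      * intros [Hx | [<- | []]]; [apply Hl in Hx|]; split; try lra; tauto.
      * intros [Hx HP]. destruct (Rle_dec x t) as [Hxt | Hxt].
        -- left. apply Hl. split; [lra | exact HP].
        -- right. left. symmetry. apply Hiso; [lra | exact HP].
  - exists l. split; [exact Hs|]. intros x. rewrite Hl. split.
    + intros [Hx HP]. split; [lra | exact HP].
    + intros [Hx HP]. split; [|exact HP]. destruct (Rle_dec x t) as [Hxt | Hxt]; [lra|].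
      exfalso. apply Hnone. rewrite <- (Hiso x); [|lra | exact HP].
      split; [lra | split; [lra | exact HP]].
Qed.

(* The supremum [s] of the [t <= b] up to which [P] can be enumerated is [b]: an
   enumeration up to a point within the isolation radius of [s] extends past [s], or to [b]. *)
Lemma enumerate_isolated (P : R -> Prop) a b :
  (forall s, locally s (fun y => y <> s -> ~ P y)) -> a <= b ->
  exists l, enumerates P a b l.
Proof.
  intros Hiso Hab.
  set (E := fun t => t <= b /\ exists l, enumerates P a t l).
  assert (Ea : E (a - 1)).
  { split; [lra|]. exists nil. split; [constructor|]. intros x. simpl. lra. }
  destruct (completeness E) as [s [Hub Hlub]].
  { exists b. intros x [Hx _]. exact Hx. }
  { exists (a - 1). exact Ea. }
  assert (Hsb : s <= b) by (apply Hlub; intros x [Hx _]; exact Hx).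
  destruct (proj1 (locally_Rabs _ _) (Hiso s)) as [e [He Hs]].
  assert (Ht : exists t, E t /\ s - e < t).
  { apply NNPP. intro N. assert (s <= s - e) by (apply Hlub; intros x Hx;
      destruct (Rle_dec x (s - e)); [lra | exfalso; apply N; exists x; split; [|lra]; exact Hx]).
    lra. }
  destruct Ht as [t [[Htb [l Hl]] Hte]].
  assert (Hts : t <= s) by (apply Hub; split; [|exists l]; assumption).
  set (u := Rmin b (s + e / 2)).
  assert (Hu : s <= u <= b /\ u <= s + e / 2)
    by (unfold u; split; [split; [apply Rmin_glb|apply Rmin_l] | apply Rmin_r]; lra).
  destruct (enumerates_extend P a t u s l Hl ltac:(lra)) as [l' Hl'].
  { intros x Hx HP. apply NNPP. intro Hxs. apply (Hs x); auto. apply Rabs_def1; lra. }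
  assert (Hus : u <= s) by (apply Hub; split; [lra | exists l'; exact Hl']).
  assert (Hub_eq : u = b).
  { unfold u in *. destruct (Rle_dec b (s + e / 2)).
    - apply Rmin_left. lra.
    - rewrite Rmin_right in Hus; lra. }
  rewrite Hub_eq in Hl'. exists l'. exact Hl'.
Qed.

Lemma enumerates_between P a b l : enumerates P a b l -> a < b -> ~ P a -> ~ P b ->
  StronglySorted Rlt (a :: l ++ b :: nil) /\ (forall t, a < t < b -> P t -> In t l).
Proof.
  intros [Hs Hl] Hab Ha Hb.
  assert (Hin : forall x, In x l -> a < x < b).
  { intros x Hx. apply Hl in Hx as [Hx HP].
    destruct (Req_dec x a) as [-> | Hxa]; [contradiction|].
    destruct (Req_dec x b) as [-> | Hxb]; [contradiction | lra]. }
  split.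
  - constructor.
    + apply Sorted_StronglySorted; [exact Rlt_trans|].
      apply Sorted_Rlt_app_single; [exact Hs|]. intros x Hx. apply Hin in Hx. lra.
    + apply Forall_forall. intros x Hx.
      apply in_app_iff in Hx as [Hx | [<- | []]]; [apply Hin in Hx; lra | exact Hab].
  - intros t Ht HP. apply Hl. split; [lra | exact HP].
Qed.

Lemma is_pw_int_telescope (h gl gr : R -> R) (S : R -> Prop) :
  (forall x y, x < y -> (forall t, x < t < y -> ~ S t) ->
     is_RInt_gen h (at_right x) (at_left y) (gl y - gr x)) ->
  forall l c d, StronglySorted Rlt (c :: l ++ d :: nil) ->
  (forall t, c < t < d -> S t -> In t l) ->
  is_pw_int h (c :: l ++ d :: nil)
    (gl d - gr c - fold_right Rplus 0 (map (fun p => gr p - gl p) l)).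
Proof.
  intros Hpiece l. induction l as [|p l IH]; intros c d Hsort HS; simpl.
  - exists (gl d - gr c), 0. split; [|split; [reflexivity | ring]].
    apply Hpiece.
    + inversion Hsort as [|? ? _ Hc]. inversion Hc. assumption.
    + intros t Ht HSt. exact (HS t Ht HSt).
  - apply StronglySorted_inv in Hsort as [Hsort Hc]. rewrite Forall_forall in Hc.
    assert (Hp : forall x, In x (l ++ d :: nil) -> p < x).
    { apply StronglySorted_inv in Hsort as [_ Hp]. rewrite Forall_forall in Hp. exact Hp. }
    assert (Hcp : c < p) by (apply Hc; left; reflexivity).
    assert (Hpd : p < d) by (apply Hp, in_or_app; right; left; reflexivity).
    exists (gl p - gr c), (gl d - gr p - fold_right Rplus 0 (map (fun p => gr p - gl p) l)).
    split; [|split; [|ring]].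
    + apply Hpiece; [exact Hcp|]. intros t Ht HSt.
      destruct (HS t ltac:(lra) HSt) as [<- | Hl]; [lra|].
      assert (p < t) by (apply Hp, in_or_app; left; exact Hl). lra.
    + apply IH; [exact Hsort|]. intros t Ht HSt.
      destruct (HS t ltac:(lra) HSt) as [<- | Hl]; [lra | exact Hl].
Qed.

Lemma fold_right_Rplus_map_const (g : R -> R) c l : (forall p, In p l -> g p = c) ->
  fold_right Rplus 0 (map g l) = c * INR (length l).
Proof.
  induction l as [|p l IH]; intros Hg.
  - simpl. ring.
  - cbn [map fold_right length]. rewrite S_INR, IH, Hg.
    + ring.
    + left. reflexivity.
    + intros q Hq. apply Hg. right. exact Hq.
Qed.

Section LogDerivative.

Variables (F f : R -> R).
Hypothesis F_C1 : is_C1 F.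
Hypothesis f_C2 : is_C2 f.
Hypothesis f_nondegenerate : nondegenerate f.
Hypothesis F_at_m_infty : is_lim F m_infty (-1).
Hypothesis F_at_p_infty : is_lim F p_infty 1.

Lemma continuous_C2 x :
  continuous f x /\ continuous (Derive f) x /\ continuous (Derive (Derive f)) x.
Proof.
  destruct (f_C2 x) as [Df [DDf CDDf]].
  split; [|split];
    [exact (ex_derive_continuous f x Df) | exact (ex_derive_continuous _ x DDf) | exact CDDf].
Qed.

Lemma ex_derive_logder x : f x <> 0 -> ex_derive (logder f) x.
Proof. intros Hx. destruct (f_C2 x) as [Df [DDf _]]. apply ex_derive_div; auto. Qed.

Lemma Derive_logder x : f x <> 0 ->
  Derive (logder f) x = (Derive (Derive f) x * f x - Derive f x * Derive f x) / f x ^ 2.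
Proof. intros Hx. destruct (f_C2 x) as [Df [DDf _]]. apply Derive_div; auto. Qed.

Lemma continuous_Derive_logder x : f x <> 0 -> continuous (Derive (logder f)) x.
Proof.
  intros Hx.
  apply (continuous_ext_loc _
    (fun y => (Derive (Derive f) y * f y - Derive f y * Derive f y) / f y ^ 2)).
  - apply (filter_imp _ _ (fun y Hy => eq_sym (Derive_logder y Hy))).
    apply continuous_locally_neq0; [apply continuous_C2 | exact Hx].
  - destruct (continuous_C2 x) as [Cf [CDf CDDf]].
    apply continuity_pt_filterlim in Cf, CDf, CDDf. apply continuity_pt_filterlim.
    apply continuity_pt_div.
    + apply continuity_pt_minus; apply continuity_pt_mult; assumption.
    + repeat apply continuity_pt_mult; try assumption.
      apply continuity_pt_const. intros u v. reflexivity.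
    + apply pow_nonzero, Hx.
Qed.

Definition Flogder x := F (logder f x).

Lemma continuous_Flogder x : f x <> 0 -> continuous Flogder x.
Proof.
  intros Hx. apply (continuous_comp (logder f) F).
  - exact (ex_derive_continuous _ x (ex_derive_logder x Hx)).
  - exact (ex_derive_continuous _ _ (proj1 (F_C1 _))).
Qed.

Lemma is_derive_Flogder x : f x <> 0 -> is_derive Flogder x (integrand F f x).
Proof.
  intros Hx. unfold integrand. rewrite Rmult_comm.
  apply (is_derive_comp F (logder f)).
  - apply Derive_correct, F_C1.
  - apply Derive_correct, ex_derive_logder, Hx.
Qed.

Lemma continuous_Derive_Flogder x : f x <> 0 -> continuous (Derive Flogder) x.
Proof.
  intros Hx. apply (continuous_ext_loc _ (integrand F f)).
  - apply (filter_imp (fun y => f y <> 0)).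
    + intros y Hy. symmetry. apply is_derive_unique, is_derive_Flogder, Hy.
    + apply continuous_locally_neq0; [apply continuous_C2 | exact Hx].
  - apply (continuous_mult (K := R_AbsRing) (fun y => Derive F (logder f y))).
    + apply (continuous_comp (logder f) (Derive F)).
      * exact (ex_derive_continuous _ x (ex_derive_logder x Hx)).
      * apply F_C1.
    + apply continuous_Derive_logder, Hx.
Qed.

(* Near a simple zero [z], [f y ~ f'(z) (y - z)] and [f' y ~ f'(z)], so the product tends to 1. *)
Lemma logder_mul_gt_third z : f z = 0 ->
  locally z (fun y => y <> z -> 1 / 3 < logder f y * (y - z)).
Proof.
  intros Hz. set (l := Derive f z).
  assert (Hl : l <> 0) by (intro E; apply (f_nondegenerate z); auto).
  assert (Hl2 : 0 < Rabs l / 2) by (generalize (Rabs_pos_lt _ Hl); lra).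
  assert (Hquot : locally z (fun y => y <> z -> Rabs (f y / (y - z) - l) < Rabs l / 2)).
  { destruct (proj1 (is_derive_Reals f z l) (Derive_correct f z (proj1 (f_C2 z))) _ Hl2)
      as [d Hd].
    apply locally_Rabs. exists d. split; [apply cond_pos|]. intros y Hy Hyz.
    specialize (Hd (y - z)). replace (z + (y - z)) with y in Hd by ring.
    rewrite Hz, Rminus_0_r in Hd. apply Hd; [intro E; apply Hyz; lra | exact Hy]. }
  assert (Hder : locally z (fun y => Rabs (Derive f y - l) < Rabs l / 2))
    by exact (proj1 (proj2 (continuous_C2 z)) _ (locally_Rabs_lt _ _ Hl2)).
  generalize (filter_and _ _ Hquot Hder). apply filter_imp. intros y [Hq Hd] Hyz.
  specialize (Hq Hyz).
  assert (Hyz' : y - z <> 0) by (intro E; apply Hyz; lra).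
  assert (Hfy : f y <> 0).
  { intro E. rewrite E in Hq. unfold Rdiv in Hq. rewrite Rmult_0_l, Rminus_0_l, Rabs_Ropp in Hq.
    lra. }
  replace (logder f y * (y - z)) with (Derive f y / (f y / (y - z)))
    by (unfold logder; field; auto).
  exact (ratio_gt_third _ _ l Hl Hd Hq).
Qed.

Lemma zeros_isolated s : locally s (fun y => y <> s -> f y <> 0).
Proof.
  destruct (Req_dec (f s) 0) as [Hs | Hs].
  - generalize (logder_mul_gt_third s Hs). apply filter_imp. intros y Hy Hys E.
    specialize (Hy Hys). unfold logder, Rdiv in Hy. rewrite E, Rinv_0, !Rmult_0_r, Rmult_0_l in Hy.
    lra.
  - apply (filter_imp (fun y => f y <> 0)); [auto|].
    apply continuous_locally_neq0; [apply continuous_C2 | exact Hs].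
Qed.

(* One-sided limits of [Flogder]: across a zero of [f], [f'/f] runs from [-oo] to [+oo]. *)
Definition Flogder_right x := if Req_EM_T (f x) 0 then 1 else Flogder x.
Definition Flogder_left x := if Req_EM_T (f x) 0 then -1 else Flogder x.

Lemma Flogder_jump x : f x = 0 -> Flogder_right x - Flogder_left x = 2.
Proof.
  intros Hx. unfold Flogder_right, Flogder_left.
  destruct (Req_EM_T (f x) 0); [ring | contradiction].
Qed.

Lemma filterlim_Flogder_right x : filterlim Flogder (at_right x) (locally (Flogder_right x)).
Proof.
  unfold Flogder_right. destruct (Req_EM_T (f x) 0) as [Hx | Hx].
  - apply (filterlim_comp _ _ _ (logder f) F _ (Rbar_locally p_infty)); [|exact F_at_p_infty].
    apply (filterlim_at_right_of_mul_gt _ _ (1 / 3)); [lra | apply logder_mul_gt_third, Hx].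
  - apply (filterlim_filter_le_1 (F := locally x));
      [apply filter_le_within | apply continuous_Flogder, Hx].
Qed.

Lemma filterlim_Flogder_left x : filterlim Flogder (at_left x) (locally (Flogder_left x)).
Proof.
  unfold Flogder_left. destruct (Req_EM_T (f x) 0) as [Hx | Hx].
  - apply (filterlim_comp _ _ _ (logder f) F _ (Rbar_locally m_infty)); [|exact F_at_m_infty].
    apply (filterlim_at_left_of_mul_gt _ _ (1 / 3)); [lra | apply logder_mul_gt_third, Hx].
  - apply (filterlim_filter_le_1 (F := locally x));
      [apply filter_le_within | apply continuous_Flogder, Hx].
Qed.

Lemma is_RInt_gen_integrand x y : x < y -> (forall t, x < t < y -> f t <> 0) ->
  is_RInt_gen (integrand F f) (at_right x) (at_left y) (Flogder_left y - Flogder_right x).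
Proof.
  intros Hxy Hnz. apply (is_RInt_gen_ext (Derive Flogder)).
  - generalize (filter_prod_between x y Hxy). apply filter_imp. intros ab Hab t Ht.
    apply is_derive_unique, is_derive_Flogder, Hnz, Hab. lra.
  - apply is_RInt_gen_Derive_open;
      [exact Hxy | | apply filterlim_Flogder_right | apply filterlim_Flogder_left].
    intros t Ht. split.
    + eexists. apply is_derive_Flogder, Hnz, Ht.
    + apply continuous_Derive_Flogder, Hnz, Ht.
Qed.

End LogDerivative.

Theorem proposition3 (f F : R -> R) (a b : R) :
  is_C2 f -> nondegenerate f -> is_C1 F ->
  is_lim F m_infty (Finite (-1)) -> is_lim F p_infty (Finite 1) ->
  a < b -> f a * f b <> 0 ->
  exists (z : list R) (v : R),
    (* z lists the zeros of f in [a,b], strictly increasing (hence without repetition) *)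
    Sorted Rlt z /\
    (forall x, In x z <-> (a <= x <= b /\ f x = 0)) /\
    (* v = sum of the improper integrals over the intervals between a, the zeros, and b *)
    is_pw_int (integrand F f) (a :: z ++ b :: nil) v /\
    INR (length z) = / 2 * (F (logder f b) - F (logder f a) - v) /\
    (Derive f a = 0 -> Derive f b = 0 -> INR (length z) = - / 2 * v).
Proof.
  intros Hf Hnd HF Hm Hp Hab Hfab.
  destruct (Rmult_neq_0_reg _ _ Hfab) as [Ha Hb].
  destruct (enumerate_isolated (fun x => f x = 0) a b (zeros_isolated f Hf Hnd) (Rlt_le _ _ Hab))
    as [z Hz].
  destruct (enumerates_between _ a b z Hz Hab Ha Hb) as [Hsorted Hzeros].
  assert (Hpw := is_pw_int_telescope (integrand F f) (Flogder_left F f) (Flogder_right F f)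
    (fun x => f x = 0) (is_RInt_gen_integrand F f HF Hf Hnd Hm Hp) z a b Hsorted Hzeros).
  rewrite (fold_right_Rplus_map_const _ 2) in Hpw
    by (intros p Hzp; apply Flogder_jump, (proj2 Hz p), Hzp).
  unfold Flogder_left, Flogder_right, Flogder in Hpw.
  destruct (Req_EM_T (f b) 0) as [E | _]; [contradiction|].
  destruct (Req_EM_T (f a) 0) as [E | _]; [contradiction|].
  exists z, (F (logder f b) - F (logder f a) - 2 * INR (length z)).
  split; [apply Hz | split; [apply Hz | split; [exact Hpw | split]]].
  - field.
  - intros Da Db. unfold logder. rewrite Da, Db, !Rdiv_0_l. field.
Qed.
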